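(* Under the setting of the context (arbitrary $S^{(0)},F_2^{(0)}$, $A_2\neq0$, $Q^\top Q=I_k$, $\mu_0>0$, $\rho>1$), there is a constant $\gamma\ge 0$ such that $\|A_2-QS^{(k)}-F_2^{(k)}\|_F\le \frac{\gamma}{\mu_k}$ for all $k=1,2,\dots$.
   Context: For a matrix $X$, $\|X\|_1=\sum_{i,j}|X_{ij}|$, $\|X\|_\infty=\max_{i,j}|X_{ij}|$, $\|X\|_F$ the Frobenius norm, $\langle Y,X\rangle=\mathrm{Trace}(Y^\top X)$. The shrinkage operator $\mathcal{S}_\tau$ acts entrywise by $\mathcal{S}_\tau(x)=\mathrm{sign}(x)\max\{|x|-\tau,0\}$. Augmented Lagrangian: $L(S,F_2,Y,\mu)=\|F_2\|_1+\langle Y,A_2-QS-F_2\rangle+\frac{\mu}{2}\|A_2-QS-F_2\|_F^2$, with $A_2\in\mathbb{R}^{m\times n}$, $Q\in\mathbb{R}^{m\times k}$, $Q^\top Q=I_k$. ALM iteration: $Y^{(0)}=A_2/\|A_2\|_\infty$, and for $k\ge0$: $S^{(k+1)}=Q^\top(A_2-F_2^{(k)}+\frac{1}{\mu_k}Y^{(k)})$, $F_2^{(k+1)}=\mathcal{S}_{1/\mu_k}(A_2-QS^{(k+1)}+\frac{1}{\mu_k}Y^{(k)})$, $Y^{(k+1)}=Y^{(k)}+\mu_k(A_2-QS^{(k+1)}-F_2^{(k+1)})$, $\mu_{k+1}=\rho\mu_k$. *)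

From HB Require Import structures.
From mathcomp Require Import all_boot all_order all_algebra.
Set Implicit Arguments. Unset Strict Implicit. Unset Printing Implicit Defensive.
Import Order.TTheory GRing.Theory Num.Theory.
Local Open Scope ring_scope.

Definition l1norm (R : rcfType) m n (X : 'M[R]_(m, n)) : R :=
  \sum_(i < m) \sum_(j < n) `|X i j|.

Definition infnorm (R : rcfType) m n (X : 'M[R]_(m, n)) : R :=
  \big[Num.max/0]_(i < m) \big[Num.max/0]_(j < n) `|X i j|.

Definition frob (R : rcfType) m n (X : 'M[R]_(m, n)) : R :=
  Num.sqrt (\sum_(i < m) \sum_(j < n) X i j ^+ 2).

Definition mxinner (R : rcfType) m n (Y X : 'M[R]_(m, n)) : R :=
  \tr (Y^T *m X).

Definition shrink (R : rcfType) (tau x : R) : R :=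
  Num.sg x * Num.max (`|x| - tau) 0.

Definition shrinkmx (R : rcfType) m n (tau : R) (X : 'M[R]_(m, n)) : 'M[R]_(m, n) :=
  map_mx (shrink tau) X.

(* The dual variable stays bounded: Y^(k+1) = mu_k (Z - S_{1/mu_k}(Z)) for the argument Z of
   the shrinkage, and shrinkage moves each entry by at most 1/mu_k, so every entry of Y^(k+1)
   lies in [-1, 1].  The residual A2 - Q S^(k+1) - F2^(k+1) equals (Y^(k+1) - Y^(k)) / mu_k,
   hence its l1 norm, and a fortiori its Frobenius norm, is O(1/mu_k) = O(rho / mu_(k+1)). *)
From HB Require Import structures.
From mathcomp Require Import all_boot all_order all_algebra.
From mathcomp Require Import ring lra.

Set Implicit Arguments.
Unset Strict Implicit.
Unset Printing Implicit Defensive.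
Import Order.TTheory GRing.Theory Num.Theory.
Local Open Scope ring_scope.

Lemma normr_sub_shrink (R : rcfType) (t x : R) : 0 <= t -> `|x - shrink t x| <= t.
Proof.
move=> t_ge0; rewrite /shrink.
case: (ltrgt0P x) => hx.
- rewrite gtr0_sg // mul1r.
  case: (ger0P (x - t)) => h.
    have -> : x - (x - t) = t by ring.
    by rewrite ger0_norm.
  rewrite subr0 gtr0_norm //; lra.
- rewrite ltr0_sg // mulN1r.
  case: (ger0P (- x - t)) => h.
    have -> : x - - (- x - t) = - t by ring.
    by rewrite normrN ger0_norm.
  rewrite oppr0 subr0 ltr0_norm //; lra.
- by rewrite hx sgr0 mul0r subr0 normr0.
Qed.

Section L1Norm.
Variables (R : rcfType) (m n : nat).
Implicit Types (X Y : 'M[R]_(m, n)).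

Lemma l1norm_ge0 X : 0 <= l1norm X.
Proof. by apply: sumr_ge0 => i _; apply: sumr_ge0. Qed.

Lemma normr_le_l1norm X i j : `|X i j| <= l1norm X.
Proof.
have le_sum_term p (F : 'I_p -> R) k : (forall l, 0 <= F l) -> F k <= \sum_l F l.
  by move=> F_ge0; rewrite (bigD1 k) //= lerDl sumr_ge0.
apply: (le_trans (y := \sum_(j < n) `|X i j|)); first exact: le_sum_term.
by apply: (le_sum_term _ (fun i => \sum_(j < n) `|X i j|)) => l; apply: sumr_ge0.
Qed.

Lemma l1normZ (a : R) X : l1norm (a *: X) = `|a| * l1norm X.
Proof.
rewrite /l1norm mulr_sumr; apply: eq_bigr => i _.
by rewrite mulr_sumr; apply: eq_bigr => j _; rewrite mxE normrM.
Qed.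

Lemma l1normB_le X Y : l1norm (X - Y) <= l1norm X + l1norm Y.
Proof.
rewrite /l1norm -big_split /=; apply: ler_sum => i _.
by rewrite -big_split /=; apply: ler_sum => j _; rewrite !mxE ler_normB.
Qed.

Lemma l1norm_le_entry_bound X (b : R) :
  (forall i j, `|X i j| <= b) -> l1norm X <= (m * n)%:R * b.
Proof.
move=> Xb; apply: (@le_trans _ _ (\sum_(i < m) \sum_(j < n) b)).
  by apply: ler_sum => i _; apply: ler_sum => j _.
by rewrite !big_const_ord !iter_addr !addr0 -mulrnA mulr_natl mulnC.
Qed.

Lemma frob_le_l1norm X : frob X <= l1norm X.
Proof.
rewrite /frob -(ger0_norm (l1norm_ge0 X)) -sqrtr_sqr ler_sqrt ?sqr_ge0 //.
apply: (@le_trans _ _ (\sum_(i < m) \sum_(j < n) `|X i j| * l1norm X)).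
  apply: ler_sum => i _; apply: ler_sum => j _.
  by rewrite -real_normK ?num_real // expr2 ler_wpM2l ?normr_le_l1norm.
by rewrite expr2 {2}/l1norm mulr_suml; apply: ler_sum => i _; rewrite mulr_suml.
Qed.

End L1Norm.

Section ALMDual.
Variables (R : rcfType) (m n r : nat) (A2 : 'M[R]_(m, n)) (Q : 'M[R]_(m, r)).
Variables (Sk : nat -> 'M[R]_(r, n)) (F2 Y : nat -> 'M[R]_(m, n)) (mu : nat -> R).
Hypothesis mu_gt0 : forall k, 0 < mu k.
Hypothesis F2_step : forall k,
  F2 k.+1 = shrinkmx (mu k)^-1 (A2 - Q *m Sk k.+1 + (mu k)^-1 *: Y k).
Hypothesis Y_step : forall k, Y k.+1 = Y k + mu k *: (A2 - Q *m Sk k.+1 - F2 k.+1).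

Lemma residual_dual_step k :
  A2 - Q *m Sk k.+1 - F2 k.+1 = (mu k)^-1 *: (Y k.+1 - Y k).
Proof.
apply/matrixP => i j; rewrite Y_step !mxE.
by field; rewrite lt0r_neq0.
Qed.

Lemma dual_entry_le1 k i j : `|Y k.+1 i j| <= 1.
Proof.
have mu_k := mu_gt0 k.
set z := A2 i j - (Q *m Sk k.+1) i j + (mu k)^-1 * Y k i j.
have -> : Y k.+1 i j = mu k * (z - shrink (mu k)^-1 z).
  by rewrite Y_step F2_step /shrinkmx !mxE /z !mxE; field; rewrite lt0r_neq0.
rewrite normrM (gtr0_norm mu_k) -(mulfV (lt0r_neq0 mu_k)) ler_pM2l //.
by apply: normr_sub_shrink; rewrite invr_ge0 ltW.
Qed.

Lemma l1norm_dual_le k : l1norm (Y k) <= (m * n)%:R + l1norm (Y 0%N).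
Proof.
case: k => [|k]; first by rewrite lerDr.
have : l1norm (Y k.+1) <= (m * n)%:R * 1 by apply/l1norm_le_entry_bound/dual_entry_le1.
by have := l1norm_ge0 (Y 0%N); rewrite mulr1; lra.
Qed.

Lemma l1norm_residual_le k :
  l1norm (A2 - Q *m Sk k.+1 - F2 k.+1)
    <= 2 * ((m * n)%:R + l1norm (Y 0%N)) / mu k.
Proof.
have mu_k := mu_gt0 k.
rewrite residual_dual_step l1normZ gtr0_norm ?invr_gt0 // mulrC ler_pM2r ?invr_gt0 //.
apply: le_trans (l1normB_le _ _) _.
by have := l1norm_dual_le k; have := l1norm_dual_le k.+1; lra.
Qed.

End ALMDual.

Theorem mainTheorem2 (R : rcfType) (m n r : nat)
  (A2 : 'M[R]_(m, n)) (Q : 'M[R]_(m, r)) (mu0 rho : R)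
  (Sk : nat -> 'M[R]_(r, n)) (F2 Y : nat -> 'M[R]_(m, n)) (mu : nat -> R) :
  A2 != 0 ->
  Q^T *m Q = 1%:M ->
  0 < mu0 -> 1 < rho ->
  mu 0%N = mu0 ->
  Y 0%N = (infnorm A2)^-1 *: A2 ->
  (forall k : nat, Sk k.+1 = Q^T *m (A2 - F2 k + (mu k)^-1 *: Y k)) ->
  (forall k : nat, F2 k.+1 = shrinkmx (mu k)^-1 (A2 - Q *m Sk k.+1 + (mu k)^-1 *: Y k)) ->
  (forall k : nat, Y k.+1 = Y k + mu k *: (A2 - Q *m Sk k.+1 - F2 k.+1)) ->
  (forall k : nat, mu k.+1 = rho * mu k) ->
  exists gamma : R, 0 <= gamma /\
    forall k : nat, (1 <= k)%N -> frob (A2 - Q *m Sk k - F2 k) <= gamma / mu k.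
Proof.
move=> _ _ mu0_gt0 rho_gt1 mu_0 _ _ F2_step Y_step mu_step.
have rho_gt0 : 0 < rho by apply: lt_trans rho_gt1.
have mu_gt0 k : 0 < mu k.
  by elim: k => [|k IH]; rewrite ?mu_0 // mu_step mulr_gt0.
set c := (m * n)%:R + l1norm (Y 0%N).
have c_ge0 : 0 <= c by rewrite addr_ge0 ?l1norm_ge0.
exists (2 * c * rho); split; first by rewrite !mulr_ge0 // ltW.
case=> [//|k] _.
apply: le_trans (frob_le_l1norm _) _.
apply: le_trans (l1norm_residual_le mu_gt0 F2_step Y_step k) _.
by rewrite mu_step invfM mulrA mulfK ?lt0r_neq0.
Qed.
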